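(* Let $\mathcal{K}$ be an amenable closed convex cone in a finite-dimensional Euclidean space and let $P$ be a polyhedral set. Then $\mathcal{K}\cap P$ is an amenable convex set. In particular, if $\mathcal{K}$ is pointed, then $\mathcal{K}=\operatorname{cone}C$ for some compact amenable convex set $C$ (a slice of $\mathcal{K}$).
   Context: $\operatorname{cone}C=\{\lambda x: x\in C,\lambda\ge0\}$. Pointed means $\mathcal{K}\cap(-\mathcal{K})=\{0\}$. A face of a closed convex set $C$ is a closed convex subset $F\subseteq C$ such that whenever $x,y\in C$ and $\alpha x+(1-\alpha)y\in F$ for some $\alpha\in(0,1)$, then $x,y\in F$. A face $F$ of $C$ is amenable if for every bounded set $B$ there exists $\kappa>0$ such that $\operatorname{dist}(x,F)\le\kappa\operatorname{dist}(x,C)$ for all $x\in(\operatorname{aff}F)\cap B$; $C$ is amenable if all its faces are amenable. *)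

From HB Require Import structures.
From mathcomp Require Import all_boot all_order all_algebra.
From mathcomp Require Import all_classical all_reals all_analysis.
Set Implicit Arguments.
Unset Strict Implicit.
Unset Printing Implicit Defensive.
Import Order.TTheory GRing.Theory Num.Theory.
Import numFieldNormedType.Exports.
Local Open Scope classical_set_scope.
Local Open Scope ring_scope.

Section Defs.
Variables (R : realType) (n : nat).
Notation V := 'rV[R]_n.

Definition enorm (x : V) : R := Num.sqrt (\sum_(i < n) x ord0 i ^+ 2).

Definition edist (x : V) (C : set V) : R := inf [set enorm (x - y) | y in C].

Definition ebounded (B : set V) : Prop :=
  exists M : R, forall x, B x -> enorm x <= M.

Definition convex_set_of (C : set V) : Prop :=
  forall x y (t : R), C x -> C y -> 0 <= t -> t <= 1 ->
    C (t *: x + (1 - t) *: y).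

Definition aff (F : set V) : set V :=
  [set z | exists (m : nat) (v : 'I_m -> V) (w : 'I_m -> R),
     (forall i, F (v i)) /\ \sum_(i < m) w i = 1 /\
     z = \sum_(i < m) w i *: v i].

Definition is_face (C F : set V) : Prop :=
  closed F /\ convex_set_of F /\ F `<=` C /\
  forall x y (a : R), C x -> C y -> 0 < a -> a < 1 ->
    F (a *: x + (1 - a) *: y) -> F x /\ F y.

Definition amenable_face (C F : set V) : Prop :=
  forall B : set V, ebounded B ->
    exists kappa : R, 0 < kappa /\
      forall x, aff F x -> B x -> edist x F <= kappa * edist x C.

Definition amenable (C : set V) : Prop :=
  forall F, is_face C F -> amenable_face C F.

Definition closed_convex_cone (K : set V) : Prop :=
  closed K /\ convex_set_of K /\
  forall x (l : R), K x -> 0 <= l -> K (l *: x).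

Definition pointed (K : set V) : Prop :=
  K `&` [set x | K (- x)] = [set 0].

Definition polyhedral (P : set V) : Prop :=
  exists (m : nat) (A : 'M[R]_(n, m)) (b : 'rV[R]_m),
    P = [set x | forall i : 'I_m, (x *m A) ord0 i <= b ord0 i].

Definition cone_of (C : set V) : set V :=
  [set z | exists x (l : R), C x /\ 0 <= l /\ z = l *: x].

End Defs.

(* It suffices to cut an amenable closed convex set C by a single half-space
   H = {y | lform a y <= b}, and to induct on the inequalities defining P.
   Amenability of a face F of C ∩ H amounts to a Lipschitz error bound: every
   bounded x of aff F is within O(|x - y|) of F, for every y of C ∩ H.  Let p be
   a relative interior point of F and G the smallest face of C containing p.  As
   G is an amenable face of C, x is within O(|x - y|) of some g in G.
   If lform a p < b, every point of G ∩ H lies in F, and a g outside H is slid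
   towards p onto the hyperplane lform a = b, moving by O(lform a g - b), that is
   O(|x - y|).  If lform a p = b, F lies on the hyperplane, the points of G on
   the hyperplane lie in F, and g is slid onto the hyperplane towards a point of
   G strictly on the other side; when there is none, G lies on one side of the
   hyperplane, F is a face of C and the amenability of C applies directly. *)

From Pilot Require Import Defs.
From HB Require Import structures.
From mathcomp Require Import all_boot all_order all_algebra.
From mathcomp Require Import all_classical all_reals all_analysis.
From mathcomp Require Import ring lra.
Import Order.TTheory GRing.Theory Num.Theory.
Import numFieldNormedType.Exports.
Set Implicit Arguments.
Unset Strict Implicit.
Unset Printing Implicit Defensive.
Local Open Scope classical_set_scope.
Local Open Scope ring_scope.

Ltac mx_field := apply/rowP => ?; rewrite !mxE; field.

Section RowNorms.
Variables (R : realType) (n : nat).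
Implicit Types x : 'rV[R]_n.

Lemma coord_le_norm x i : `|x ord0 i| <= `|x|.
Proof.
by rewrite [leRHS]/Num.Def.normr /= mx_normrE; apply/bigmax_geP; right; exists (ord0, i).
Qed.

Lemma enorm_ge0 x : 0 <= enorm x.
Proof. exact: sqrtr_ge0. Qed.

Lemma norm_le_enorm x : `|x| <= enorm x.
Proof.
rewrite [leLHS]/Num.Def.normr /= mx_normrE; apply/bigmax_leP; split=> [|[i j] _ /=].
  exact: enorm_ge0.
rewrite ord1 /enorm -sqrtr_sqr ler_sqrt ?sumr_ge0 // => [|k _]; last exact: sqr_ge0.
by rewrite (bigD1 j) //= lerDl sumr_ge0 // => k _; rewrite sqr_ge0.
Qed.

Lemma enorm_le_norm x : enorm x <= n%:R * `|x|.
Proof.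
rewrite /enorm -[leRHS]ger0_norm ?mulr_ge0 // -sqrtr_sqr ler_sqrt ?sqr_ge0 //.
have sq_le i : x ord0 i ^+ 2 <= `|x| ^+ 2.
  by rewrite -real_normK ?num_real // lerXn2r ?nnegrE ?coord_le_norm.
apply: le_trans (ler_sum _ (fun i _ => sq_le i)) _.
rewrite sumr_const card_ord exprMn -[_ *+ n]mulr_natl ler_wpM2r ?sqr_ge0 //.
by rewrite -natrX ler_nat; case: n => // k; rewrite expnS leq_pmulr.
Qed.

Lemma norm_le_coords x c : 0 <= c -> (forall i, `|x ord0 i| <= c) -> `|x| <= c.
Proof.
move=> c0 hc; rewrite [leLHS]/Num.Def.normr /= mx_normrE.
by apply/bigmax_leP; split => // -[i j] _; rewrite ord1; exact: hc.
Qed.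

End RowNorms.

Section LinearForms.
Variables (R : realType) (n : nat).
Notation V := 'rV[R]_n.
Implicit Types (a : 'cV[R]_n) (x y : V).

Definition lform a y : R := (y *m a) ord0 ord0.

Lemma lformD a x y : lform a (x + y) = lform a x + lform a y.
Proof. by rewrite /lform mulmxDl mxE. Qed.

Lemma lformZ a c y : lform a (c *: y) = c * lform a y.
Proof. by rewrite /lform -scalemxAl mxE. Qed.

Lemma lformB a x y : lform a (x - y) = lform a x - lform a y.
Proof. by rewrite /lform mulmxBl !mxE. Qed.

Lemma lformNl a y : lform (- a) y = - lform a y.
Proof. by rewrite /lform mulmxN !mxE. Qed.

Lemma lform_sum a m (w : 'I_m -> R) (v : 'I_m -> V) :
  lform a (\sum_(i < m) w i *: v i) = \sum_(i < m) w i * lform a (v i).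
Proof.
elim/big_rec2: _ => [|i s t _ <-]; first by rewrite /lform mul0mx mxE.
by rewrite lformD lformZ.
Qed.

Lemma lform_lipschitz a : exists2 L : R, 0 < L & forall y, `|lform a y| <= L * `|y|.
Proof.
exists (\sum_(k < n) `|a k ord0| + 1) => [|y]; first by rewrite ltr_pwDr ?sumr_ge0.
suff h : `|lform a y| <= (\sum_(k < n) `|a k ord0|) * `|y|.
  by apply: le_trans h _; rewrite ler_wpM2r // lerDl.
rewrite /lform mxE mulr_suml; apply: le_trans (ler_norm_sum _ _ _) _; apply: ler_sum => k _.
by rewrite normrM mulrC ler_wpM2l ?coord_le_norm.
Qed.

Lemma lform_continuous a : continuous (lform a).
Proof.
have [L L0 hL] := lform_lipschitz a.
move=> y; apply/(@cvgrPdist_le _ _ _ (nbhs y)) => e e0; near=> z.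
rewrite -lformB; apply: le_trans (hL _) _; rewrite mulrC -ler_pdivlMr //.
by near: z; apply: cvgr_dist_le => //; rewrite divr_gt0.
Unshelve. all: by end_near.
Qed.

Lemma lform_col m (A : 'M[R]_(n, m)) x j : (x *m A) ord0 j = lform (col j A) x.
Proof. by rewrite /lform !mxE; apply: eq_bigr => k _; rewrite mxE. Qed.

End LinearForms.

Section Subspaces.
Variables (R : realType) (n : nat).
Notation V := 'rV[R]_n.

Definition subspace (T : set V) : Prop :=
  [/\ T 0, forall u v, T u -> T v -> T (u + v) & forall (c : R) u, T u -> T (c *: u)].

Lemma subspace_sum (T : set V) k (c : 'I_k -> R) (u : 'I_k -> V) :
  subspace T -> (forall i, T (u i)) -> T (\sum_(i < k) c i *: u i).
Proof. by move=> [T0 TD TZ] Tu; apply: big_ind => // i _; apply: TZ. Qed.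

Lemma subspace_submx (T : set V) k (M : 'M[R]_(k, n)) z :
  subspace T -> (forall i, T (row i M)) -> (z <= M)%MS -> T z.
Proof. by move=> sT TM /mulmxKpV <-; rewrite mulmx_sum_row; exact: subspace_sum. Qed.

(* A family of points of S of maximal rank spans S. *)
Lemma exists_spanning_rows (S : set V) :
  exists k (M : 'M[R]_(k, n)), (forall i, S (row i M)) /\ forall z, S z -> (z <= M)%MS.
Proof.
pose has_rank : pred nat := fun r =>
  `[< exists k (M : 'M[R]_(k, n)), (forall i, S (row i M)) /\ \rank M = r >].
have rank0 : has_rank 0%N.
  apply/asboolP; exists 0%N, 0; split; first by case.
  by apply/eqP; rewrite -leqn0 rank_leq_row.
have rank_le r : has_rank r -> (r <= n)%N by move=> /asboolP [k [M [_ <-]]]; exact: rank_leq_col.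
case: (ex_maxnP (ex_intro has_rank 0%N rank0) rank_le) => r /asboolP [k [M [SM <-]]] rmax.
exists k, M; split => // z Sz; apply/negPn/negP => zM.
have : has_rank (\rank (col_mx M z)).
  apply/asboolP; exists (k + 1)%N, (col_mx M z); split => // i.
  by case: (split_ordP i) => j ->; rewrite ?rowKu ?rowKd // ord1 row_id.
move/rmax; rewrite -addsmxE leqNgt; apply/negP/negPn.
have : (M < M + z)%MS by rewrite ltmxE addsmxSl /= addsmx_sub submx_refl.
by rewrite ltmxErank => /andP [].
Qed.

Lemma subspace_closed (T : set V) : subspace T -> closed T.
Proof.
move=> sT; have [k [M [TM hM]]] := exists_spanning_rows T.
have -> : T = \bigcap_(j in [set: 'I_n]) (lform (col j (cokermx M)) @^-1` [set 0]).
  apply/seteqP; split => v /=.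
    by move=> /hM; rewrite submxE => /eqP vM j _ /=; rewrite -(lform_col (cokermx M)) vM mxE.
  move=> v0; apply: subspace_submx sT TM _; rewrite submxE; apply/eqP/rowP => j.
  by rewrite lform_col (v0 j I) mxE.
apply: closed_bigI => j _; apply: preimage_closed; last exact: closed_eq.
by move=> x _; exact: lform_continuous.
Qed.

End Subspaces.

Section Directions.
Variables (R : realType) (n : nat).
Notation V := 'rV[R]_n.
Implicit Types (S : set V) (p q v z : V).

Definition bidir S p : set V :=
  [set v | exists2 e : R, 0 < e & forall s : R, `|s| <= e -> S (p + s *: v)].

Definition relint_point S p : Prop := S p /\ forall z, S z -> bidir S p (z - p).

Lemma bidir_subspace S p : convex_set_of S -> S p -> subspace (bidir S p).
Proof.
move=> cS Sp; split; first by exists 1 => // s _; rewrite scaler0 addr0.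
  move=> u v [e1 e10 h1] [e2 e20 h2].
  exists (Num.min e1 e2 / 2) => [|s hs]; first by rewrite divr_gt0 // lt_min e10 e20.
  have hs2 : `|2 * s| <= Num.min e1 e2.
    by rewrite normrM ger0_norm // -ler_pdivlMl // mulrC.
  have -> : p + s *: (u + v) = 2^-1 *: (p + (2 * s) *: u) + (1 - 2^-1) *: (p + (2 * s) *: v).
    by mx_field.
  apply: cS; rewrite ?invr_ge0 ?invf_le1 ?ler1n //.
    by apply: h1; apply: le_trans hs2 _; rewrite ge_min lexx.
  by apply: h2; apply: le_trans hs2 _; rewrite ge_min lexx orbT.
move=> c u [e e0 h]; exists (e / (`|c| + 1)) => [|s hs]; first by rewrite divr_gt0 // ltr_wpDl.
rewrite scalerA; apply: h; rewrite normrM.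
rewrite ler_pdivlMr ?ltr_wpDl // in hs; apply: le_trans hs.
by rewrite ler_wpM2l // lerDl.
Qed.

Lemma bidir_mono S S' p : S `<=` S' -> bidir S p `<=` bidir S' p.
Proof. by move=> sS v [e e0 h]; exists e => // s /h /sS. Qed.

Lemma bidir_extend S p z eps : convex_set_of S -> S p -> S z -> 0 < eps ->
  S (p + eps *: (p - z)) -> bidir S p (z - p).
Proof.
move=> cS Sp Sz e0 Sw; exists (Num.min eps 1) => [|s]; first by rewrite lt_min e0 ltr01.
rewrite le_min => /andP [hse hs1]; have [s0|s0] := leP 0 s.
  have -> : p + s *: (z - p) = s *: z + (1 - s) *: p by mx_field.
  by apply: cS; rewrite // -(ger0_norm s0).
have -> : p + s *: (z - p) = (- s / eps) *: (p + eps *: (p - z)) + (1 - (- s / eps)) *: p.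
  by apply/rowP => ?; rewrite !mxE; field; rewrite gt_eqF.
rewrite ltr0_norm // in hse.
by apply: cS; rewrite // ?ler_pdivrMr ?mul1r // divr_ge0 //; lra.
Qed.

Lemma bidir_opposite S p z : bidir S p (z - p) -> exists2 eps, 0 < eps & S (p + eps *: (p - z)).
Proof.
move=> [e e0 h]; exists e => //.
have -> : p + e *: (p - z) = p + (- e) *: (z - p) by mx_field.
by apply: h; rewrite normrN gtr0_norm.
Qed.

Lemma bidir_midpoint S p g : convex_set_of S -> S p -> S g ->
  bidir S p `<=` bidir S (2^-1 *: g + (1 - 2^-1) *: p) /\
  bidir S (2^-1 *: g + (1 - 2^-1) *: p) (g - p).
Proof.
move=> cS Sp Sg; split.
  move=> v [e e0 h]; exists (e / 2) => [|s hs]; first by rewrite divr_gt0.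
  have -> : 2^-1 *: g + (1 - 2^-1) *: p + s *: v =
     2^-1 *: g + (1 - 2^-1) *: (p + (2 * s) *: v) by mx_field.
  apply: cS => //; try lra; apply: h.
  by rewrite normrM ger0_norm // -ler_pdivlMl // mulrC.
exists 2^-1 => [|s]; first by rewrite invr_gt0.
rewrite ler_norml => /andP [hs1 hs2].
have -> : 2^-1 *: g + (1 - 2^-1) *: p + s *: (g - p) =
   (2^-1 + s) *: g + (1 - (2^-1 + s)) *: p by mx_field.
by apply: cS => //; lra.
Qed.

(* Successive midpoints towards the points q + row i M, which span S - q, turn
   every row into a two-sided direction. *)
Lemma exists_relint_point S q : convex_set_of S -> S q -> exists p, relint_point S p.
Proof.
move=> cS Sq.
have [k [M [SM spanM]]] := exists_spanning_rows [set v : V | S (v + q)].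
suff [p [Sp Tpq Ti]] : exists p, [/\ S p, bidir S p (p - q) &
    forall i : 'I_k, bidir S p (row i M)].
  exists p; split => // z Sz; have [_ TD TZ] := bidir_subspace cS Sp.
  have -> : z - p = (z - q) + (-1) *: (p - q) by mx_field.
  apply: TD; last exact: TZ.
  by apply: subspace_submx (bidir_subspace cS Sp) Ti _; apply: spanM; rewrite /= subrK.
suff step l : exists p, [/\ S p, bidir S p (p - q) &
    forall i : 'I_k, (i < l)%N -> bidir S p (row i M)].
  by have [p [Sp Tpq Ti]] := step k; exists p; split => // i; apply: Ti.
elim: l => [|l [p [Sp Tpq Ti]]].
  by exists q; split => //; rewrite subrr; case: (bidir_subspace cS Sq).
have [lk|kl] := ltnP l k; last first.
  by exists p; split => // i il; apply: Ti; exact: leq_trans (ltn_ord i) kl.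
pose g := row (Ordinal lk) M + q.
have [Tp T1] := bidir_midpoint cS Sp (SM (Ordinal lk) : S g).
set p1 := 2^-1 *: g + (1 - 2^-1) *: p in Tp T1 *.
have Sp1 : S p1 by apply: cS => //; [exact: SM | lra].
have [_ TD TZ] := bidir_subspace cS Sp1.
have Tgq : bidir S p1 (g - q).
  have -> : g - q = (g - p) + (p - q) by mx_field.
  by apply: TD => //; exact: Tp.
exists p1; split => //.
  have -> : p1 - q = 2^-1 *: (g - q) + (1 - 2^-1) *: (p - q) by rewrite /p1; mx_field.
  by apply: TD; apply: TZ => //; exact: Tp.
move=> i; rewrite ltnS leq_eqVlt => /orP [/eqP il|il]; last exact/Tp/Ti.
have -> : i = Ordinal lk by apply: val_inj.
by move: Tgq; rewrite /g addrK.
Qed.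

End Directions.

Section Faces.
Variables (R : realType) (n : nat).
Notation V := 'rV[R]_n.
Implicit Types (C D F : set V) (p q x z : V).

Lemma aff_nonempty F x : aff F x -> exists y, F y.
Proof.
move=> [[|m] [v [w [Fv [sw _]]]]]; last by exists (v ord0).
by move: sw; rewrite big_ord0 => /eqP; rewrite eq_sym oner_eq0.
Qed.

Lemma aff_mono F F' : F `<=` F' -> aff F `<=` aff F'.
Proof. by move=> FF' x [m [v [w [Fv h]]]]; exists m, v, w; split => // i; apply: FF'. Qed.

Lemma lform_aff (a : 'cV[R]_n) (b : R) F x :
  (forall y, F y -> lform a y = b) -> aff F x -> lform a x = b.
Proof.
move=> Fb [m [v [w [Fv [sw ->]]]]]; rewrite lform_sum.
under eq_bigr do rewrite Fb //.
by rewrite -mulr_suml sw mul1r.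
Qed.

Lemma face_extend D F q z eps : is_face D F -> F q -> D z -> 0 < eps ->
  D (q + eps *: (q - z)) -> F z.
Proof.
move=> [_ [_ [FD extF]]] Fq Dz e0 Dw.
have e1 : 0 < 1 + eps by rewrite ltr_wpDl.
have a0 : 0 < eps / (1 + eps) by rewrite divr_gt0.
have a1 : eps / (1 + eps) < 1 by rewrite ltr_pdivrMr // mul1r ltrDr.
have := extF _ _ _ Dz Dw a0 a1.
have -> : eps / (1 + eps) *: z + (1 - eps / (1 + eps)) *: (q + eps *: (q - z)) = q.
  by apply/rowP => ?; rewrite !mxE; field; rewrite gt_eqF.
by case.
Qed.

Lemma face_aff D F : is_face D F -> D `&` aff F `<=` F.
Proof.
move=> fF z [Dz aFz]; have [_ [cF [FD _]]] := fF.
have [y Fy] := aff_nonempty aFz.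
have [p [Fp relp]] := exists_relint_point cF Fy.
have : bidir F p (z - p).
  case: aFz => m [v [w [Fv [sw ->]]]].
  have -> : \sum_(i < m) w i *: v i - p = \sum_(i < m) w i *: (v i - p).
    by under [RHS]eq_bigr do rewrite scalerBr; rewrite sumrB -scaler_suml sw scale1r.
  by apply: subspace_sum (bidir_subspace cF Fp) _ => i; exact: relp.
move=> /bidir_opposite [eps e0 Fw].
exact: face_extend fF Fp Dz e0 (FD _ Fw).
Qed.

(* The smallest face of C containing p. *)
Definition minface C p : set V := [set z | C z /\ bidir C p (z - p)].

Lemma bidir_comb C p y z a : convex_set_of C -> C p -> C y -> C z ->
  0 < a -> a < 1 -> bidir C p (a *: y + (1 - a) *: z - p) -> bidir C p (y - p).
Proof.
move=> cC Cp Cy Cz a0 a1 [e e0 h].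
pose d := Num.min (e / 2) 2^-1.
have d0 : 0 < d by rewrite lt_min divr_gt0 //= invr_gt0.
have [d1 d2] : d <= e / 2 /\ d <= 2^-1 by split; rewrite ge_min lexx ?orbT.
apply: (@bidir_extend _ _ C p y (d * a)) => //; first by rewrite mulr_gt0.
have -> : p + (d * a) *: (p - y) =
  2^-1 *: (p + (- (2 * d)) *: (a *: y + (1 - a) *: z - p)) +
  (1 - 2^-1) *: ((2 * d * (1 - a)) *: z + (1 - (2 * d * (1 - a))) *: p) by mx_field.
apply: (cC); try lra; first by apply: h; rewrite normrN ger0_norm; lra.
have t0 : 0 <= 2 * d * (1 - a) by rewrite mulr_ge0 ?mulr_ge0 //; lra.
have t1 : 2 * d * (1 - a) <= 2 * d by rewrite ler_piMr //; lra.
by apply: cC => //; lra.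
Qed.

Lemma minface_face C p : closed C -> convex_set_of C -> C p -> is_face C (minface C p).
Proof.
move=> clC cC Cp; have sT := bidir_subspace cC Cp; have [_ TD TZ] := sT.
split.
  apply: closedI => //; apply: (@preimage_closed _ _ (fun z => z - p)); last exact: subspace_closed.
  by move=> x _; exact: (cvgB cvg_id (cvg_cst p)).
split.
  move=> x y t [Cx Tx] [Cy Ty] t0 t1; split; first exact: cC.
  have -> : t *: x + (1 - t) *: y - p = t *: (x - p) + (1 - t) *: (y - p) by mx_field.
  by apply: TD; apply: TZ.
split=> [z []//|y z a Cy Cz a0 a1 [_ Tw]]; split; split => //.
  exact: bidir_comb Cy Cz a0 a1 Tw.
apply: (@bidir_comb C p z y (1 - a)) => //; try lra.
by have -> : (1 - a) *: z + (1 - (1 - a)) *: y = a *: y + (1 - a) *: z by mx_field.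
Qed.

Lemma relint_sub_minface C F p : F `<=` C -> relint_point F p -> F `<=` minface C p.
Proof. by move=> FC [_ relp] z Fz; split; [exact: FC | exact: bidir_mono FC _ (relp z Fz)]. Qed.

End Faces.

Section ErrorBounds.
Variables (R : realType) (n : nat).
Notation V := 'rV[R]_n.
Implicit Types (C F S : set V) (x y z : V).

Lemma edist_le x S y : S y -> Defs.edist x S <= enorm (x - y).
Proof.
move=> Sy; apply: ge_inf; last by exists y.
by exists 0 => _ [z _ <-]; exact: enorm_ge0.
Qed.

Lemma edist_approx x S e : (exists y, S y) -> 0 < e ->
  exists2 y, S y & enorm (x - y) < Defs.edist x S + e.
Proof.
move=> [y0 Sy0] e0.
have hinf : has_inf [set enorm (x - y) | y in S].
  split; first by exists (enorm (x - y0)), y0.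
  by exists 0 => _ [z _ <-]; exact: enorm_ge0.
by have [_ [z Sz <-] ?] := inf_adherent e0 hinf; exists z.
Qed.

Lemma edist_ge x S c : (exists y, S y) ->
  (forall y, S y -> c <= enorm (x - y)) -> c <= Defs.edist x S.
Proof.
move=> [y0 Sy0] h; apply: lb_le_inf; first by exists (enorm (x - y0)), y0.
by move=> _ [y Sy <-]; exact: h.
Qed.

(* Amenability of the face F of C, with witnesses instead of infima and with
   the max norm instead of the equivalent Euclidean one. *)
Definition error_bound C F : Prop :=
  forall M : R, exists2 k : R, 0 < k & forall x, aff F x -> `|x| <= M ->
    forall y, C y -> exists2 z, F z & `|x - z| <= k * `|x - y|.

Lemma error_bound_sub C C' F : C' `<=` C -> error_bound C F -> error_bound C' F.
Proof.
move=> C'C ebF M; have [k k0 hk] := ebF M.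
by exists k => // x ax xM y /C'C; exact: hk.
Qed.

Lemma amenable_face_error_bound C F : is_face C F -> amenable_face C F -> error_bound C F.
Proof.
move=> fF amF M.
have Bbd : ebounded [set x : V | `|x| <= M].
  by exists (n%:R * M) => x xM; apply: le_trans (enorm_le_norm x) _; rewrite ler_wpM2l.
have [ka [ka0 hka]] := amF _ Bbd.
exists (n%:R * ka + 1) => [|x ax xM y Cy]; first by rewrite ltr_pwDr // mulr_ge0 // ltW.
have [xy|xy] := eqVneq x y.
  by subst y; exists x; [exact: (face_aff fF (conj Cy ax)) | rewrite subrr normr0 mulr0].
have d0 : 0 < `|x - y| by rewrite normr_gt0 subr_eq0.
have [z Fz xz] := edist_approx x (aff_nonempty ax) d0.
exists z => //; apply: (le_trans (norm_le_enorm (x - z))); apply: ltW.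
apply: (lt_le_trans xz); rewrite mulrDl mul1r lerD2r; apply: le_trans (hka x ax xM) _.
rewrite -mulrA mulrCA; apply: ler_wpM2l; first exact: ltW.
exact: le_trans (edist_le x Cy) (enorm_le_norm _).
Qed.

Lemma error_bound_amenable_face C F : F `<=` C -> error_bound C F -> amenable_face C F.
Proof.
move=> FC ebF B [M hB]; have [k k0 hk] := ebF M.
have k1 : 0 < n%:R * k + 1 by rewrite ltr_pwDr // mulr_ge0 // ltW.
exists (n%:R * k + 1); split => // x ax Bx.
have [z0 Fz0] := aff_nonempty ax.
rewrite -ler_pdivrMl //; apply: edist_ge => [|y Cy]; first by exists z0; exact: FC.
have [z Fz xz] := hk x ax (le_trans (norm_le_enorm x) (hB x Bx)) y Cy.
rewrite ler_pdivrMl //; apply: le_trans (edist_le x Fz) _.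
apply: (le_trans (enorm_le_norm (x - z))).
have : n%:R * `|x - z| <= n%:R * (k * enorm (x - y)).
  apply: ler_wpM2l => //; apply: le_trans xz _.
  by apply: ler_wpM2l; [exact: ltW | exact: norm_le_enorm].
have := enorm_ge0 (x - y); rewrite mulrDl mul1r -mulrA; lra.
Qed.

End ErrorBounds.

Section Hyperplanes.
Variables (R : realType) (n : nat).
Notation V := 'rV[R]_n.
Implicit Types (G : set V) (a : 'cV[R]_n) (b : R) (q g x : V).

Lemma hyperplane_point_near_pos G a b q g x : convex_set_of G -> G q -> G g ->
  lform a q < b <= lform a g ->
  exists2 g', G g' /\ lform a g' = b &
    `|x - g'| <= 2 * `|x - g| + (lform a g - b) / (b - lform a q) * `|x - q|.
Proof.
move=> cG Gq Gg /andP [qb bg].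
(* g' is where the segment [g, q] crosses the hyperplane. *)
pose t := (lform a g - b) / (lform a g - lform a q).
have t0 : 0 <= t by rewrite divr_ge0 //; lra.
have t1 : t <= 1 by rewrite ler_pdivrMr ?mul1r; lra.
have t_le : t <= (lform a g - b) / (b - lform a q).
  by rewrite ler_wpM2l ?subr_ge0 // lef_pV2 ?posrE; lra.
exists (t *: q + (1 - t) *: g); first split.
- exact: cG.
- by rewrite lformD !lformZ /t; field; lra.
have -> : x - (t *: q + (1 - t) *: g) = (x - g) - t *: (q - g) by mx_field.
apply: le_trans (ler_normB _ _) _; rewrite normrZ ger0_norm //.
have qg : `|q - g| <= `|x - q| + `|x - g| by rewrite (distrC x q) ler_distD.
have : t * `|q - g| <= t * `|x - q| + t * `|x - g|.
  by rewrite -mulrDr ler_wpM2l.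
have : t * `|x - g| <= `|x - g| by rewrite ler_piMl.
have : t * `|x - q| <= (lform a g - b) / (b - lform a q) * `|x - q| by rewrite ler_wpM2r.
lra.
Qed.

Lemma hyperplane_point_near G a b q g x : convex_set_of G -> G q -> G g ->
  lform a q < b <= lform a g \/ lform a g <= b < lform a q ->
  exists2 g', G g' /\ lform a g' = b &
    `|x - g'| <= 2 * `|x - g| + `|lform a g - b| / `|lform a q - b| * `|x - q|.
Proof.
move=> cG Gq Gg [/andP [qb bg]|/andP [gb bq]].
  have [g' Gg' h] := hyperplane_point_near_pos x cG Gq Gg (introT andP (conj qb bg)).
  by exists g' => //; rewrite ger0_norm ?subr_ge0 // ltr0_norm ?subr_lt0 // opprB.
have [|g' [Gg' e] h] := hyperplane_point_near_pos (a := - a) (b := - b) x cG Gq Gg.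
  by rewrite !lformNl ltrN2 lerN2 bq gb.
exists g'; first by split => //; apply: oppr_inj; rewrite -lformNl.
rewrite ler0_norm ?subr_le0 // gtr0_norm ?subr_gt0 // opprB.
by move: h; rewrite !lformNl !opprK (addrC (- lform a g)) (addrC (- b)).
Qed.

Lemma hyperplane_point_bound G a b q g x (M c L d : R) : convex_set_of G -> G q -> G g ->
  lform a q < b <= lform a g \/ lform a g <= b < lform a q ->
  `|x| <= M -> `|x - g| <= c * d -> `|lform a g - b| <= L * d ->
  exists2 g', G g' /\ lform a g' = b &
    `|x - g'| <= (2 * c + L * (`|M| + `|q|) / `|lform a q - b|) * d.
Proof.
move=> cG Gq Gg side xM xg gb.
have s0 : 0 < `|lform a q - b|.
  by rewrite normr_gt0 subr_eq0; case: side => /andP [h1 h2]; [rewrite lt_eqF | rewrite gt_eqF].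
have [g' Gg' h] := hyperplane_point_near x cG Gq Gg side.
exists g' => //; apply: le_trans h _.
have xq : `|x - q| <= `|M| + `|q|.
  by apply: le_trans (ler_normB _ _) _; rewrite lerD2r (le_trans xM (ler_norm M)).
have h1 : 2 * `|x - g| <= 2 * c * d by rewrite -mulrA ler_wpM2l.
have h2 : `|lform a g - b| / `|lform a q - b| * `|x - q| <=
    L * (`|M| + `|q|) / `|lform a q - b| * d.
  rewrite [leRHS](_ : _ = L * d / `|lform a q - b| * (`|M| + `|q|)); last by ring.
  by apply: ler_pM => //; rewrite ?divr_ge0 // ler_pM2r ?invr_gt0.
by rewrite mulrDl; lra.
Qed.

End Hyperplanes.

Section CapHalfspace.
Variables (R : realType) (n : nat).
Notation V := 'rV[R]_n.

Definition halfspace (a : 'cV[R]_n) (b : R) : set V := [set y | lform a y <= b].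

Lemma halfspace_closed a b : closed (halfspace a b).
Proof.
apply: (@preimage_closed _ _ (lform a) [set x | x <= b]); last exact: closed_le.
by move=> x _; exact: lform_continuous.
Qed.

Lemma halfspace_convex a b : convex_set_of (halfspace a b).
Proof.
move=> x y t hx hy t0 t1; rewrite /halfspace /= lformD !lformZ.
have : t * lform a x <= t * b by rewrite ler_wpM2l.
have : (1 - t) * lform a y <= (1 - t) * b by rewrite ler_wpM2l ?subr_ge0.
lra.
Qed.

Lemma convex_setI (C D : set V) :
  convex_set_of C -> convex_set_of D -> convex_set_of (C `&` D).
Proof. by move=> cC cD x y t [Cx Dx] [Cy Dy] t0 t1; split; [exact: cC | exact: cD]. Qed.

Variables (C : set V) (a : 'cV[R]_n) (b : R).
Hypotheses (clC : closed C) (cC : convex_set_of C) (amC : amenable C).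
Let D := C `&` halfspace a b.

Section FaceOfCap.
Variables (F : set V) (p : V).
Hypotheses (fF : is_face D F) (relp : relint_point F p).
Let G := minface C p.

Let FD : F `<=` D. Proof. by case: fF => _ [_ []]. Qed.
Let Fp : F p. Proof. by case: relp. Qed.
Let Cp : C p. Proof. by case: (FD Fp). Qed.
Let p_le : lform a p <= b. Proof. by case: (FD Fp). Qed.
Let fG : is_face C G. Proof. exact: minface_face. Qed.
Let cG : convex_set_of G. Proof. by case: fG => _ []. Qed.
Let FG : F `<=` G. Proof. by apply: relint_sub_minface relp => z /FD []. Qed.

Lemma minface_cap_sub z : G z -> D z -> lform a p < b \/ b <= lform a z -> F z.
Proof.
move=> [Cz [e e0 he]] Dz side.
suff [eps [eps0 epse hb]] : exists eps, [/\ 0 < eps, eps <= e &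
    lform a p + eps * (lform a p - lform a z) <= b].
  apply: (face_extend fF Fp Dz eps0); split; last by rewrite /halfspace /= lformD lformZ lformB.
  have -> : p + eps *: (p - z) = p + (- eps) *: (z - p) by mx_field.
  by apply: he; rewrite normrN gtr0_norm.
case: side => [p_lt|bz]; last first.
  exists e; split => //; have : e * (lform a p - lform a z) <= 0.
    by rewrite pmulr_rle0 // subr_le0 (le_trans p_le).
  by have := p_le; lra.
pose c := `|lform a p - lform a z| + 1.
have c0 : 0 < c by rewrite ltr_pwDr.
have eps0 : 0 < Num.min e ((b - lform a p) / c) by rewrite lt_min e0 divr_gt0 // subr_gt0.
exists (Num.min e ((b - lform a p) / c)); split => //; first by rewrite ge_min lexx.
have epsc : Num.min e ((b - lform a p) / c) * c <= b - lform a p.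
  by rewrite -ler_pdivlMr // ge_min lexx orbT.
have : Num.min e ((b - lform a p) / c) * (lform a p - lform a z) <=
       Num.min e ((b - lform a p) / c) * c.
  apply: ler_wpM2l; first exact: ltW.
  by rewrite (le_trans (ler_norm _)) // lerDl.
lra.
Qed.

Lemma minface_error_bound M : exists2 c : R, 0 < c & forall x, aff F x -> `|x| <= M ->
  forall y, D y -> exists2 g, G g & `|x - g| <= c * `|x - y|.
Proof.
have [c c0 hc] := amenable_face_error_bound fG (amC fG) M.
by exists c => // x ax xM y [Cy _]; exact: hc x (aff_mono FG ax) xM y Cy.
Qed.

Lemma cap_error_bound_interior : lform a p < b -> error_bound D F.
Proof.
move=> p_lt M; have [c c0 hc] := minface_error_bound M.
have [L L0 hL] := lform_lipschitz a.
have K0 : 0 <= L * (c + 1) * (`|M| + `|p|) / `|lform a p - b|.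
  by rewrite divr_ge0 // !mulr_ge0 ?addr_ge0 // ltW.
have c2 : c <= 2 * c by rewrite ler_peMl ?ler1n // ltW.
exists (2 * c + L * (c + 1) * (`|M| + `|p|) / `|lform a p - b|); first lra.
move=> x ax xM y Dy; have [g Gg xg] := hc x ax xM y Dy.
have [gb|bg] := leP (lform a g) b.
  exists g; first by apply: minface_cap_sub => //; [split; [case: Gg | ] | left].
  by apply: (le_trans xg); apply: ler_wpM2r => //; lra.
have gyb : `|lform a g - b| <= L * (c + 1) * `|x - y|.
  have yb : lform a y <= b by case: Dy.
  have gy : lform a g - b <= lform a (g - y) by rewrite lformB; lra.
  rewrite ger0_norm; last by rewrite subr_ge0; exact: ltW.
  apply: (le_trans (le_trans gy (ler_norm _))).
  apply: (le_trans (hL _)); rewrite -mulrA; apply: ler_wpM2l; first exact: ltW.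
  by rewrite mulrDl mul1r (le_trans (ler_distD x _ _)) // distrC lerD2r.
have [g' [Gg' g'b] xg'] := hyperplane_point_bound cG (FG Fp) Gg
  (or_introl (introT andP (conj p_lt (ltW bg)))) xM xg gyb.
exists g' => //; apply: minface_cap_sub => //; last by left.
by split; [case: Gg' | rewrite /halfspace /= g'b].
Qed.

Section OnHyperplane.
Hypothesis p_eq : lform a p = b.

Lemma cap_face_on_hyperplane z : F z -> lform a z = b.
Proof.
move=> Fz; have [_ /(_ z Fz) /bidir_opposite [eps e0 Fw]] := relp.
have [_ zb] := FD Fz; have [_] := FD Fw; rewrite /halfspace /= lformD lformZ lformB p_eq => wb.
have : eps * (b - lform a z) <= 0 by lra.
by rewrite pmulr_rle0 // subr_le0 => bz; apply/eqP; rewrite eq_le zb bz.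
Qed.

Lemma cap_error_bound_two_sided qp qm : G qp -> b < lform a qp -> G qm -> lform a qm < b ->
  error_bound D F.
Proof.
move=> Gqp bqp Gqm qmb M.
have [c c0 hc] := minface_error_bound M; have [L L0 hL] := lform_lipschitz a.
pose K q := L * c * (`|M| + `|q|) / `|lform a q - b|.
have K0 q : 0 <= K q by rewrite divr_ge0 // !mulr_ge0 ?addr_ge0 // ltW.
have c2 : 0 < 2 * c by rewrite mulr_gt0.
exists (2 * c + K qp + K qm); first by have := K0 qp; have := K0 qm; lra.
move=> x ax xM y Dy; have [g Gg xg] := hc x ax xM y Dy.
have gb : `|lform a g - b| <= L * c * `|x - y|.
  rewrite -(lform_aff cap_face_on_hyperplane ax) -lformB; apply: (le_trans (hL _)).
  by rewrite -mulrA; apply: ler_wpM2l; [exact: ltW | rewrite distrC].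
suff anchor q : G q -> lform a q < b <= lform a g \/ lform a g <= b < lform a q ->
    exists2 z, F z & `|x - z| <= (2 * c + K q) * `|x - y|.
  have [bg|gb'] := leP b (lform a g).
    have [z Fz xz] := anchor qm Gqm (or_introl (introT andP (conj qmb bg))).
    by exists z => //; apply: (le_trans xz); apply: ler_wpM2r => //; have := K0 qp; lra.
  have [z Fz xz] := anchor qp Gqp (or_intror (introT andP (conj (ltW gb') bqp))).
  by exists z => //; apply: (le_trans xz); apply: ler_wpM2r => //; have := K0 qm; lra.
move=> Gq side; have [g' [Gg' g'b] xg'] := hyperplane_point_bound cG Gq Gg side xM xg gb.
exists g' => //; apply: minface_cap_sub => //; last by right; rewrite g'b.
by split; [case: Gg' | rewrite /halfspace /= g'b].
Qed.

Lemma cap_error_bound_one_sided :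
    (forall z, G z -> b <= lform a z) \/ (forall z, G z -> lform a z <= b) ->
  error_bound D F.
Proof.
(* F = G ∩ {lform a = b} is then an exposed face of the face G of C. *)
move=> side; suff fFC : is_face C F.
  by apply: error_bound_sub (amenable_face_error_bound fFC (amC fFC)) => z [].
have [clF [cF _]] := fF; split => //; split => //; split; first by move=> z /FD [].
move=> y1 y2 t Cy1 Cy2 t0 t1 Fw; have [_ [_ [_ extG]]] := fG.
have [Gy1 Gy2] := extG _ _ _ Cy1 Cy2 t0 t1 (FG Fw).
have := cap_face_on_hyperplane Fw; rewrite lformD !lformZ => wb.
have [y1b y2b] : lform a y1 = b /\ lform a y2 = b.
  by case: side => h; have := h _ Gy1; have := h _ Gy2; split; nra.
by split; apply: minface_cap_sub; rewrite /D /halfspace /= ?y1b ?y2b; auto.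
Qed.

End OnHyperplane.
End FaceOfCap.

Lemma amenable_cap_halfspace : amenable D.
Proof.
move=> F fF; have [_ [cF [FD _]]] := fF.
apply: error_bound_amenable_face => [z /FD [] //|].
have [[q Fq]|F0] := pselect (exists q, F q); last first.
  by move=> M; exists 1 => // x /aff_nonempty Fx; case: F0.
have [p relp] := exists_relint_point cF Fq.
have [_ p_le] := FD _ relp.1.
have [p_lt|p_ge] := ltP (lform a p) b; first exact: (cap_error_bound_interior fF relp p_lt).
have p_eq : lform a p = b by apply/eqP; rewrite eq_le p_le p_ge.
have [[qp Gqp bqp]|above] := pselect (exists2 q, minface C p q & b < lform a q).
  have [[qm Gqm qmb]|below] := pselect (exists2 q, minface C p q & lform a q < b).
    exact: (cap_error_bound_two_sided fF relp p_eq Gqp bqp Gqm qmb).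
  apply: (cap_error_bound_one_sided fF relp p_eq); left => z Gz.
  by rewrite leNgt; apply/negP => zb; apply: below; exists z.
apply: (cap_error_bound_one_sided fF relp p_eq); right => z Gz.
by rewrite leNgt; apply/negP => bz; apply: above; exists z.
Qed.

End CapHalfspace.

Section Polyhedra.
Variables (R : realType) (n : nat).
Notation V := 'rV[R]_n.

Lemma polyhedral_cap_amenable (K P : set V) :
  closed K -> convex_set_of K -> amenable K -> polyhedral P ->
  [/\ closed (K `&` P), convex_set_of (K `&` P) & amenable (K `&` P)].
Proof.
move=> clK cK aK [m [A [b ->]]].
pose Ks (s : seq 'I_m) := K `&` [set x | forall i, i \in s -> lform (col i A) x <= b ord0 i].
suff /(_ (enum 'I_m)) : forall s, [/\ closed (Ks s), convex_set_of (Ks s) & amenable (Ks s)].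
  suff -> : K `&` [set x | forall i, (x *m A) ord0 i <= b ord0 i] = Ks (enum 'I_m) by [].
  apply/seteqP; split => x [Kx hx]; split => // i; first by rewrite -lform_col.
  by rewrite lform_col; apply: hx; rewrite mem_enum.
elim => [|i s [clS cS aS]].
  suff -> : Ks [::] = K by [].
  by apply/seteqP; split => [x []//|x Kx]; split.
have -> : Ks (i :: s) = Ks s `&` halfspace (col i A) (b ord0 i).
  apply/seteqP; split => [x [Kx hx]|x [[Kx hx] hi]].
    by split; [split => // j js; apply: hx; rewrite in_cons js orbT | apply: hx; rewrite mem_head].
  by split => // j; rewrite in_cons => /orP [/eqP -> //|]; exact: hx.
split; [by apply: closedI => //; exact: halfspace_closed |
        by apply: convex_setI => //; exact: halfspace_convex |].
exact: amenable_cap_halfspace.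
Qed.

Definition unit_cube : set V := [set x | `|x| <= 1].

Lemma unit_cube_polyhedral : polyhedral unit_cube.
Proof.
exists (n + n)%N, (row_mx 1%:M (- 1%:M)), (const_mx 1).
apply/seteqP; split => x /=; rewrite mul_mx_row mulmxN mulmx1.
  move=> x1 i; case: (split_ordP i) => j ->; rewrite ?row_mxEl ?row_mxEr !mxE;
    by have := le_trans (coord_le_norm x j) x1; rewrite ler_norml => /andP [? ?]; lra.
move=> h; apply: norm_le_coords => // j.
have := h (lshift n j); have := h (rshift n j); rewrite row_mxEl row_mxEr !mxE => ? ?.
by rewrite ler_norml; apply/andP; split; lra.
Qed.

Lemma compact_sub_unit_cube (S : set V) : closed S -> S `<=` unit_cube -> compact S.
Proof.
move=> clS Su; apply: bounded_closed_compact clS.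
by exists 1; split => // M M1 x Sx; apply: le_trans (Su x Sx) (ltW M1).
Qed.

Lemma cone_of_cap_unit_cube (K : set V) : (forall x (l : R), K x -> 0 <= l -> K (l *: x)) ->
  K = cone_of (K `&` unit_cube).
Proof.
move=> coneK; apply/seteqP; split => [z Kz|_ [x [l [[Kx _] [l0 ->]]]]]; last exact: coneK.
have l0 : 0 < 1 + `|z| by rewrite ltr_pwDl.
exists ((1 + `|z|)^-1 *: z), (1 + `|z|); split; [split|split].
- by apply: coneK; rewrite // invr_ge0 ltW.
- rewrite /unit_cube /= normrZ ger0_norm ?invr_ge0 ?(ltW l0) //.
  by rewrite mulrC ler_pdivrMr // mul1r lerDr.
- exact: ltW.
- by rewrite scalerA divff ?gt_eqF // scale1r.
Qed.

End Polyhedra.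

Theorem proposition4p1 (R : realType) (n : nat) (K P : set 'rV[R]_n) :
  closed_convex_cone K -> amenable K -> polyhedral P ->
  (closed (K `&` P) /\ convex_set_of (K `&` P) /\ amenable (K `&` P)) /\
  (pointed K ->
     exists C : set 'rV[R]_n,
       compact C /\ convex_set_of C /\ amenable C /\ K = cone_of C).
Proof.
move=> [clK [cK coneK]] aK polP.
have [clKP cKP aKP] := polyhedral_cap_amenable clK cK aK polP.
split=> // _.
have [clC cC aC] := polyhedral_cap_amenable clK cK aK (@unit_cube_polyhedral R n).
exists (K `&` @unit_cube R n); split; first exact: compact_sub_unit_cube clC (fun x => @proj2 _ _).
by do 2 split => //; exact: cone_of_cap_unit_cube.
Qed.
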